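(* Let $k,\ell\ge2$ and $c\le 1$. There is a constant $\delta>0$ such that with high probability no set of $t$ vertices of $\hat W_n=\hat W^{k,\ell}_{n,cn}$ with $0<t<\delta n$ (a set of total weight $\ell t$) induces edges of total weight $\ell t$ or more.
   Context: $\hat W_n$: weighted hypergraph with vertex set $\mathbb{Z}_n$, each vertex of weight $\ell$; ordinary edges $e_1,\dots,e_{cn}$, each a multiset of $k$ independent uniformly random elements of $\mathbb{Z}_n$, of weight $1$; helper edges $\{i,i+1\}$ for $i\in\mathbb{Z}_n$ (mod $n$), of weight $\ell-1$. A set $S$ of vertices induces an edge if all vertices of the edge lie in $S$. ''With high probability'' means with probability tending to $1$ as $n\to\infty$. *)

From HB Require Import structures.
From mathcomp Require Import all_boot all_order all_algebra.
From mathcomp Require Import reals.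
Set Implicit Arguments. Unset Strict Implicit. Unset Printing Implicit Defensive.
Import Order.TTheory GRing.Theory Num.Theory.
Local Open Scope ring_scope.

(* A configuration of the m ordinary edges of \hat W_n: edge i is the
   k-tuple (multiset) of its vertices (E i 0, ..., E i (k-1)) in Z_n = 'I_n.
   The uniform distribution on configurations = each vertex of each edge
   chosen independently and uniformly. *)
Definition edge_config (n m k : nat) := {ffun 'I_m -> {ffun 'I_k -> 'I_n}}.

(* total weight of the edges induced by S:
   ordinary edges (weight 1) entirely inside S, plus helper edges
   {j, j+1 mod n} (weight l-1, indexed by j in Z_n) inside S. *)
Definition induced_weight (n m k l : nat) (E : edge_config n m k)
    (S : {set 'I_n}) : nat :=
  (#|[set i : 'I_m | [forall j : 'I_k, E i j \in S]]|
   + (l - 1) * #|[set j : 'I_n | (j \in S) && (ordS j \in S)]|)%N.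

Definition bad_event (R : realType) (delta : R) (n m k l : nat)
    (E : edge_config n m k) : bool :=
  [exists S : {set 'I_n},
     [&& (0 < #|S|)%N, (#|S|%:R < delta * n%:R) &
         (l * #|S| <= induced_weight l E S)%N]].

Definition prob_good (R : realType) (delta : R) (n m k l : nat) : R :=
  #|[set E : edge_config n m k | ~~ bad_event delta l E]|%:R
  / #|[set: edge_config n m k]|%:R.

(* number of ordinary edges: cn, rounded down (0 if c n < 0) *)
Definition num_edges (R : realType) (c : R) (n : nat) : nat :=
  Num.truncn (c * n%:R).

(* A first-moment argument.  A set S of t vertices with r(S) maximal runs around
   the cycle contains t - r(S) helper edges, so if it induces weight at least l t
   then at least t + (l - 1) r(S) >= t + r(S) ordinary edges lie inside S.  For a
   fixed S and y = t/n this has probability at most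
   C(m, t + r) y^(k (t + r)) <= e^t y^(t + r).  A transfer-matrix recursion along
   the cycle bounds the sum of y^r(S) over the sets of size t by
   (3/2) 2^t (1 + y)^n <= (3/2) 2^t e^t, so these sets contribute at most
   (3/2) (2 e^2 y)^t, which is at most 6 e^2 / (n 2^t) when t < n / (8 e^2).
   Summing over t, the bad event has probability at most 12 e^2 / n. *)

From mathcomp Require Import all_boot all_order all_algebra.
From mathcomp Require Import reals exp sequences.
From mathcomp Require Import ring lra zify.
Import Order.TTheory GRing.Theory Num.Theory.
Set Implicit Arguments. Unset Strict Implicit. Unset Printing Implicit Defensive.

Fixpoint bool_seqs (m : nat) : seq (seq bool) :=
  if m is m'.+1 then [seq false :: s | s <- bool_seqs m'] ++ [seq true :: s | s <- bool_seqs m']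
  else [:: [::]].

Lemma mem_map_cons (T : eqType) (b c : T) (s : seq T) (L : seq (seq T)) :
  (c :: s \in [seq b :: x | x <- L]) = (c == b) && (s \in L).
Proof. by apply/mapP/andP => [[x Lx [-> ->]] | [/eqP -> Ls]]; [split | exists s]. Qed.

Lemma mem_bool_seqs m s : (s \in bool_seqs m) = (size s == m).
Proof.
elim: m s => [|m IH] [|b s] //=; rewrite mem_cat ?mem_map_cons.
- by apply/negbTE; rewrite negb_or; apply/andP; split; apply/mapP => -[x _].
- by rewrite IH eqSS; case: b; rewrite /= ?orbF.
Qed.

Lemma uniq_bool_seqs m : uniq (bool_seqs m).
Proof.
elim: m => [|m IH] //=.
rewrite cat_uniq !map_inj_uniq ?IH //=; try by move=> x y [].
by rewrite andbT; apply/hasPn => _ /mapP [s _ ->]; apply/mapP => -[].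
Qed.

Definition set_of_seq n (s : seq bool) : {set 'I_n} := [set j : 'I_n | nth false s j].

Lemma card_set_of_seq n s : size s = n -> #|set_of_seq n s| = count id s.
Proof.
move=> <-; rewrite -sum1_count (big_nth false) big_mkord -sum1_card.
by apply: eq_bigl => j; rewrite inE.
Qed.

(* The number of maximal runs of S around the cycle Z_n (0 when S is all of Z_n). *)
Definition run_ends n (S : {set 'I_n}) : nat :=
  #|[set j : 'I_n | (j \in S) && (ordS j \notin S)]|.

Lemma card_adjacent_add_run_ends n (S : {set 'I_n}) :
  #|[set j : 'I_n | (j \in S) && (ordS j \in S)]| + run_ends S = #|S|.
Proof.
rewrite -(cardsID [set j | ordS j \in S] S); congr (_ + _);
by apply: eq_card => j; rewrite !inE andbC.
Qed.

(* The number of steps true -> false along the path p :: r ++ [:: b0]. *)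
Fixpoint descents (p b0 : bool) (r : seq bool) : nat :=
  if r is b :: r' then (p && ~~ b) + descents b b0 r' else p && ~~ b0.

Lemma descentsE p b0 r : descents p b0 r =
  \sum_(j < (size r).+1) (nth false (p :: r) j && ~~ nth false (rcons r b0) j).
Proof.
elim: r p => [|b r IH] p /=; first by rewrite big_ord_recl big_ord0 addn0.
by rewrite big_ord_recl IH.
Qed.

Lemma run_ends_set_of_seq b0 r :
  run_ends (set_of_seq (size r).+1 (b0 :: r)) = descents b0 b0 r.
Proof.
rewrite descentsE /run_ends -sum1_card big_mkcond /=.
apply: eq_bigr => j _; rewrite !inE /= nth_rcons.
have [-> | j_neq_r] := eqVneq (j : nat) (size r).
  by rewrite modnn ltnn; case: (nth _ _ _); case: b0.
have lt_jr : j < size r by rewrite ltn_neqAle j_neq_r -ltnS ltn_ord.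
by rewrite modn_small ?ltnS // lt_jr /=; case: (nth _ (_ :: _) _); case: (nth _ r _).
Qed.

Lemma exists_subset_card (T : finType) (A : {set T}) a : a <= #|A| ->
  exists2 B : {set T}, B \subset A & #|B| = a.
Proof.
move=> le_aA; exists [set x in take a (enum A)].
  by apply/subsetP => x; rewrite inE => /mem_take; rewrite mem_enum.
rewrite cardsE; have /card_uniqP -> : uniq (take a (enum A)) by rewrite take_uniq ?enum_uniq.
by rewrite size_takel // -cardE.
Qed.

Section EdgesInside.
Variables n m k : nat.

Definition edges_inside (E : edge_config n m k) (S : {set 'I_n}) : {set 'I_m} :=
  [set i : 'I_m | [forall j : 'I_k, E i j \in S]].

Lemma card_subset_edges_inside (S : {set 'I_n}) (I : {set 'I_m}) :
  #|[set E : edge_config n m k | I \subset edges_inside E S]| =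
  (#|S| ^ k) ^ #|I| * (n ^ k) ^ (m - #|I|).
Proof.
pose F i := [pred f : {ffun 'I_k -> 'I_n} | (i \in I) ==> [forall j, f j \in S]].
have -> : #|[set E : edge_config n m k | I \subset edges_inside E S]| = #|family F|.
  apply: eq_card => E; rewrite inE; apply/subsetP/familyP => E_F i.
  - by rewrite inE /=; apply/implyP => /E_F; rewrite inE.
  - by move=> Ii; move: (E_F i); rewrite inE /= Ii inE.
rewrite card_family foldrE big_map big_enum (bigID (mem I)) /=.
rewrite (eq_bigr (fun _ => #|S| ^ k)) => [|i Ii]; last first.
  rewrite -[X in _ ^ X]card_ord -card_ffun_on; apply: eq_card => f.
  by rewrite inE /= Ii; apply/forallP/ffun_onP.
rewrite [X in _ * X](eq_bigr (fun _ => n ^ k)) => [|i Ii]; last first.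
  rewrite -[X in X ^ _]card_ord -[X in _ ^ X]card_ord -card_ffun.
  by apply: eq_card => f; rewrite inE /= (negbTE Ii).
rewrite !prod_nat_const; congr (_ * _ ^ _).
rewrite (@eq_card _ _ (~: I)) => [|i]; last by rewrite !inE.
by rewrite cardsCs setCK card_ord.
Qed.

Lemma card_edges_inside_ge (S : {set 'I_n}) a :
  #|[set E : edge_config n m k | a <= #|edges_inside E S|]| <=
  'C(m, a) * ((#|S| ^ k) ^ a * (n ^ k) ^ (m - a)).
Proof.
have cover : [set E : edge_config n m k | a <= #|edges_inside E S|] \subset
    \bigcup_(I : {set 'I_m} | #|I| == a) [set E | I \subset edges_inside E S].
  apply/subsetP => E; rewrite inE => /exists_subset_card [I sub_I card_I].
  by apply/bigcupP; exists I; rewrite ?inE ?card_I.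
apply: leq_trans (subset_leq_card cover) _; apply: leq_trans (unstable.card_big_setU _ _ _) _.
rewrite (eq_bigr (fun _ => (#|S| ^ k) ^ a * (n ^ k) ^ (m - a))) => [|I /eqP <-]; last first.
  exact: card_subset_edges_inside.
rewrite sum_nat_const -[m in 'C(m, _)]card_ord -card_draws.
by apply: eq_leq; congr (_ * _); apply: eq_card => I; rewrite inE.
Qed.

End EdgesInside.

Lemma ffact_le_expn m n a : m <= n -> m ^_ a <= n ^ a.
Proof.
move=> le_mn; rewrite ffact_prod; apply: leq_trans (_ : _ <= \prod_(i < a) n) _.
  by apply: leq_prod => i _; apply: leq_trans (leq_subr _ _) le_mn.
by rewrite prod_nat_const card_ord.
Qed.

Local Open Scope ring_scope.

Lemma big_set_bool_seqs (V : nmodType) n (F : {set 'I_n} -> V) :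
  \sum_(S : {set 'I_n}) F S = \sum_(s <- bool_seqs n) F (set_of_seq n s).
Proof.
rewrite -(big_map (set_of_seq n) xpredT); apply/perm_big/uniq_perm.
- exact: index_enum_uniq.
- rewrite map_inj_in_uniq ?uniq_bool_seqs // => s1 s2.
  rewrite !mem_bool_seqs => /eqP s1n /eqP s2n eqS.
  apply: (@eq_from_nth _ false); rewrite ?s1n ?s2n // => i lt_in.
  by have := congr1 (fun A : {set _} => Ordinal lt_in \in A) eqS; rewrite !inE.
- move=> S; rewrite mem_index_enum; symmetry; apply/mapP.
  exists [seq j \in S | j <- enum 'I_n]; first by rewrite mem_bool_seqs size_map size_enum_ord.
  by apply/setP => j; rewrite inE (nth_map j) ?size_enum_ord // nth_ord_enum.
Qed.

Lemma big_card_partition (V : nmodType) n (P : pred {set 'I_n}) (F : {set 'I_n} -> V) :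
  \sum_(S | P S) F S = \sum_(t < n.+1) \sum_(S | P S && (#|S| == t)) F S.
Proof.
rewrite (partition_big (fun S : {set 'I_n} => inord #|S| : 'I_n.+1) xpredT) //=.
apply: eq_bigr => t _; apply: eq_bigl => S; congr (_ && _).
have card_S : (#|S| < n.+1)%N by rewrite ltnS -[X in (_ <= X)%N]card_ord max_card.
by rewrite -val_eqE /= inordK.
Qed.

Lemma card_edge_configs n m k : #|[set: edge_config n m k]| = ((n ^ k) ^ m)%N.
Proof. by rewrite cardsT !card_ffun !card_ord. Qed.

Section DescentSums.
Variables (R : numDomainType) (x y : R).

Definition descent_sum m p b0 : R :=
  \sum_(r <- bool_seqs m) x ^+ count id r * y ^+ descents p b0 r.

Lemma descent_sum0 p b0 : descent_sum 0 p b0 = y ^+ (p && ~~ b0).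
Proof. by rewrite /descent_sum big_seq1 mul1r. Qed.

Lemma descent_sumS m p b0 :
  descent_sum m.+1 p b0 = y ^+ p * descent_sum m false b0 + x * descent_sum m true b0.
Proof.
rewrite /descent_sum big_cat !big_map !mulr_sumr.
congr (_ + _); apply: eq_bigr => r _;
  by rewrite /= !exprD; case: p; rewrite /= ?expr0 ?expr1; ring.
Qed.

End DescentSums.

Section RunEndsSum.
Variable R : realFieldType.

(* Chosen so that y ^+ p * g false b0 + g true b0 / 2 <= (1 + y) * g p b0: by
   [descent_sumS], with x = 1/2 each extra vertex costs at most a factor 1 + y. *)
Definition descent_potential (y : R) (p b0 : bool) : R :=
  match p, b0 with
  | false, true => (2 * y)^-1
  | true, false => 2 * y
  | _, _ => 1
  end.

Lemma descent_sum_le (y : R) m p b0 : 0 < y -> y <= 2^-1 ->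
  descent_sum 2^-1 y m p b0 <= (1 + y) ^+ m * descent_potential y p b0.
Proof.
move=> y_gt0 y_le; have inv2y_ge1 : 1 <= (2 * y)^-1 by rewrite invf_ge1; lra.
have y_inv2y : y * (2 * y)^-1 = 2^-1 by rewrite invfM mulrCA divff ?mulr1 ?gt_eqF.
elim: m p b0 => [|m IH] p b0.
  by rewrite descent_sum0 expr0 mul1r; case: p; case: b0; rewrite /= ?expr0 ?expr1; lra.
have contract : y ^+ p * descent_potential y false b0 + 2^-1 * descent_potential y true b0
    <= (1 + y) * descent_potential y p b0.
  by case: p; case: b0; rewrite /= ?expr0 ?expr1; nra.
rewrite descent_sumS exprSr -mulrA; apply: le_trans (ler_wpM2l _ contract); last first.
  by apply: exprn_ge0; lra.
rewrite mulrDr !mulrA ![_ * y ^+ p]mulrC ![_ * 2^-1]mulrC -!mulrA.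
apply: lerD; apply: ler_wpM2l; rewrite ?exprn_ge0 //; lra.
Qed.

Lemma sum_run_ends_le n (y : R) : 0 < y -> y <= 2^-1 ->
  \sum_(S : {set 'I_n}) (2^-1) ^+ #|S| * y ^+ run_ends S <= 3 / 2 * (1 + y) ^+ n.
Proof.
move=> y_gt0 y_le; case: n => [|n].
  have card0 (A : {set 'I_0}) : #|A| = 0%N by apply: eq_card0 => -[].
  by rewrite big_set_bool_seqs big_seq1 /run_ends !card0 mul1r; lra.
rewrite big_set_bool_seqs /= big_cat !big_map.
(* Cut the cycle at vertex 0: its membership b is both ends of the remaining path. *)
have cons_sum b : \sum_(r <- bool_seqs n) (2^-1) ^+ #|set_of_seq n.+1 (b :: r)| *
     y ^+ run_ends (set_of_seq n.+1 (b :: r)) = (2^-1) ^+ b * descent_sum 2^-1 y n b b.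
  rewrite mulr_sumr big_seq [RHS]big_seq; apply: eq_bigr => r; rewrite mem_bool_seqs => /eqP <-.
  by rewrite card_set_of_seq // run_ends_set_of_seq exprD mulrA.
rewrite !cons_sum expr0 mul1r expr1.
have := descent_sum_le n false false y_gt0 y_le; have := descent_sum_le n true true y_gt0 y_le.
have : (1 + y) ^+ n <= (1 + y) ^+ n.+1 by rewrite exprS ler_peMl ?exprn_ge0; lra.
rewrite /=; lra.
Qed.

Lemma sum_card_run_ends_le n t (y : R) : 0 < y -> y <= 2^-1 ->
  \sum_(S : {set 'I_n} | #|S| == t) y ^+ run_ends S <= 3 / 2 * 2 ^+ t * (1 + y) ^+ n.
Proof.
move=> y_gt0 y_le.
have -> : 3 / 2 * 2 ^+ t * (1 + y) ^+ n = 2 ^+ t * (3 / 2 * (1 + y) ^+ n) by ring.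
apply: le_trans (ler_wpM2l (exprn_ge0 _ (ler0n _ 2)) (sum_run_ends_le n y_gt0 y_le)).
rewrite mulr_sumr [leLHS]big_mkcond /=; apply: ler_sum => S _.
case: eqP => [<- | _]; last by rewrite !(mulr_ge0, exprn_ge0) // ?invr_ge0 ltW.
by rewrite mulrA -exprMn divff ?expr1n ?mul1r // pnatr_eq0.
Qed.

End RunEndsSum.

Section Probability.
Variable R : realType.

Lemma pow_div_fact_le_expR (x : R) a : 0 <= x -> x ^+ a / a`!%:R <= expR x.
Proof.
move=> x_ge0; case: a => [|a]; last by have := expR_ge1Dxn a x_ge0; lra.
by rewrite expr0 fact0 divr1; have := expR_ge1Dx x; lra.
Qed.

Lemma bin_le_pow_div_fact m n a : (m <= n)%N -> 'C(m, a)%:R <= n%:R ^+ a / a`!%:R :> R.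
Proof.
move=> le_mn; rewrite ler_pdivlMr ?ltr0n ?fact_gt0 // -natrM -natrX ler_nat bin_ffact.
exact: ffact_le_expn.
Qed.

Lemma edge_tail_ratio_le n m k t a : (2 <= k)%N -> (0 < n)%N -> (t <= n)%N -> (m <= n)%N ->
  ('C(m, a) * ((t ^ k) ^ a * (n ^ k) ^ (m - a)))%:R / ((n ^ k) ^ m)%:R
    <= expR t%:R * (t%:R / n%:R) ^+ a :> R.
Proof.
move=> k_ge2 n_gt0 le_tn le_mn.
set N : R := n%:R; set y := t%:R / N.
have N_gt0 : 0 < N by rewrite ltr0n.
have y_ge0 : 0 <= y by rewrite divr_ge0 ?ler0n ?ltW.
have y_le1 : y <= 1 by rewrite ler_pdivrMr // mul1r ler_nat.
have [le_am | lt_ma] := leqP a m; last first.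
  by rewrite bin_small // mul0n mul0r mulr_ge0 ?expR_ge0 ?exprn_ge0.
have -> : ('C(m, a) * ((t ^ k) ^ a * (n ^ k) ^ (m - a)))%:R / ((n ^ k) ^ m)%:R
    = 'C(m, a)%:R * y ^+ (k * a).
  have nk_neq0 b : ((n ^ k) ^ b)%:R != 0 :> R by rewrite pnatr_eq0 -lt0n !expn_gt0 n_gt0.
  have -> : ((n ^ k) ^ m = (n ^ k) ^ a * (n ^ k) ^ (m - a))%N by rewrite -expnD subnKC.
  rewrite /y exprM !expr_div_n -!natrX !natrM.
  by field; rewrite !nk_neq0.
apply: le_trans (_ : _ <= 'C(m, a)%:R * y ^+ (2 * a)) _.
  by rewrite ler_wpM2l ?ler0n // ler_wiXn2l // leq_mul2r k_ge2 orbT.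
apply: le_trans (_ : _ <= N ^+ a / a`!%:R * y ^+ (2 * a)) _.
  by rewrite ler_wpM2r ?exprn_ge0 // bin_le_pow_div_fact.
have -> : N ^+ a / a`!%:R * y ^+ (2 * a) = t%:R ^+ a / a`!%:R * y ^+ a.
  have Ny : N * y = t%:R by rewrite /y mulrC divfK ?gt_eqF.
  by rewrite -Ny [(N * y) ^+ a]exprMn mul2n -addnn exprD; ring.
by rewrite ler_wpM2r ?exprn_ge0 // pow_div_fact_le_expR.
Qed.

Definition small_set (delta : R) n (S : {set 'I_n}) : bool :=
  (0 < #|S|)%N && (#|S|%:R < delta * n%:R).

Lemma bad_event_witness (delta : R) n m k l (E : edge_config n m k) :
  (2 <= l)%N -> bad_event delta l E ->
  exists2 S, small_set delta S & (#|S| + run_ends S <= #|edges_inside E S|)%N.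
Proof.
move=> l_ge2 /existsP [S /and3P [S_gt0 S_lt heavy]].
exists S; first by rewrite /small_set S_gt0.
have := card_adjacent_add_run_ends S; move: heavy; rewrite /induced_weight -/(edges_inside E S).
set h := #|[set j | _]|; nia.
Qed.

Lemma card_bad_event_le (delta : R) n m k l : (2 <= l)%N ->
  (#|[set E : edge_config n m k | bad_event delta l E]| <=
   \sum_(S : {set 'I_n} | small_set delta S)
      #|[set E : edge_config n m k | #|S| + run_ends S <= #|edges_inside E S|]|)%N.
Proof.
move=> l_ge2.
have cover : [set E : edge_config n m k | bad_event delta l E] \subset
    \bigcup_(S : {set 'I_n} | small_set delta S)
      [set E | (#|S| + run_ends S <= #|edges_inside E S|)%N].
  apply/subsetP => E; rewrite inE => /(bad_event_witness l_ge2) [S small_S heavy].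
  by apply/bigcupP; exists S; rewrite ?inE.
exact: leq_trans (subset_leq_card cover) (unstable.card_big_setU _ _ _).
Qed.

Lemma sum_inv_pow2_le N : \sum_(i < N) (2 ^+ i)^-1 <= 2 :> R.
Proof.
suff -> : \sum_(i < N) (2 ^+ i)^-1 = 2 - 2 / 2 ^+ N :> R.
  by rewrite lerBlDr lerDl divr_ge0 ?exprn_ge0.
elim: N => [|N IH]; first by rewrite big_ord0 expr0 divr1 subrr.
by rewrite big_ord_recr /= IH exprS; field; rewrite expf_neq0 ?pnatr_eq0.
Qed.

Lemma pow_le_half_pow t (w : R) : (0 < t)%N -> 0 <= w -> t%:R * w <= 4^-1 ->
  (t%:R * w) ^+ t <= 2 * w / 2 ^+ t.
Proof.
case: t => // t _ w_ge0 tw_le.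
set p : R := 2 ^+ t; have p_gt0 : 0 < p by rewrite exprn_gt0.
apply: le_trans (_ : _ <= t.+1%:R * w * (p^-1 * p^-1)) _.
  have -> : p^-1 * p^-1 = (4^-1) ^+ t by rewrite -exprVn -exprMn; congr (_ ^+ _); field.
  by rewrite exprS ler_wpM2l ?mulr_ge0 //; apply: lerXn2r; rewrite ?nnegrE ?mulr_ge0 ?invr_ge0.
apply: le_trans (_ : _ <= p * w * (p^-1 * p^-1)) _.
  apply: ler_wpM2r; first by rewrite mulr_ge0 ?invr_ge0 ?ltW.
  by apply: ler_wpM2r => //; rewrite /p -natrX ler_nat ltn_expl.
rewrite exprS -/p; have -> : 2 * w / (2 * p) = p * w * (p^-1 / p) by field; rewrite gt_eqF.
exact: lexx.
Qed.

Definition sparse_delta : R := (8 * expR 2)^-1.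

Lemma sparse_delta_gt0 : 0 < sparse_delta.
Proof. by rewrite invr_gt0 mulr_gt0 ?expR_gt0. Qed.

Lemma sum_card_tail_le n t : (0 < n)%N -> (0 < t)%N -> t%:R / n%:R <= 2^-1 :> R ->
  \sum_(S : {set 'I_n} | #|S| == t) expR t%:R * (t%:R / n%:R) ^+ (t + run_ends S)
    <= 3 / 2 * (2 * expR 2 * (t%:R / n%:R)) ^+ t :> R.
Proof.
move=> n_gt0 t_gt0 y_le; set y := t%:R / n%:R.
have y_gt0 : 0 < y by rewrite divr_gt0 ?ltr0n.
have ny : n%:R * y = t%:R by rewrite mulrC divfK // pnatr_eq0 -lt0n.
have growth : (1 + y) ^+ n <= expR t%:R.
  rewrite -ny expRM_natl lerXn2r ?nnegrE ?expR_ge0 ?expR_ge1Dx //; lra.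
under eq_bigr do rewrite exprD mulrA.
rewrite -mulr_sumr; apply: le_trans (ler_wpM2l _ (sum_card_run_ends_le n t y_gt0 y_le)) _.
  by rewrite mulr_ge0 ?expR_ge0 ?exprn_ge0 ?ltW.
apply: le_trans (_ : _ <= expR t%:R * y ^+ t * (3 / 2 * 2 ^+ t * expR t%:R)) _.
  apply: ler_wpM2l; first by rewrite mulr_ge0 ?expR_ge0 ?exprn_ge0 ?ltW.
  by apply: ler_wpM2l => //; apply: mulr_ge0; [lra | apply: exprn_ge0; lra].
have e2t : expR 2 ^+ t = expR t%:R * expR t%:R :> R.
  by rewrite -expRD -expRM_natl; congr expR; ring.
rewrite !exprMn e2t; lra.
Qed.

Lemma sum_small_card_le n t : (0 < n)%N ->
  \sum_(S : {set 'I_n} | small_set sparse_delta S && (#|S| == t))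
     expR t%:R * (t%:R / n%:R) ^+ (t + run_ends S) <= 6 * expR 2 / n%:R / 2 ^+ t :> R.
Proof.
move=> n_gt0; have nR_gt0 : 0 < n%:R :> R by rewrite ltr0n.
have e2_ge1 : 1 <= expR 2 :> R by have := expR_ge1Dx (2 : R); lra.
have [/andP [t_gt0 t_lt] | not_small] :=
  boolP ((0 < t)%N && (t%:R < sparse_delta * n%:R)); last first.
  rewrite big_pred0 ?mulr_ge0 ?invr_ge0 ?exprn_ge0 ?expR_ge0 ?ltW // => S.
  by apply: contraNF not_small => /andP [small_S /eqP <-].
rewrite (eq_bigl (fun S : {set 'I_n} => #|S| == t)) => [|S]; last first.
  by have [card_S | _] := eqVneq #|S| t; rewrite ?andbF // andbT /small_set card_S t_gt0 t_lt.
set w : R := 2 * expR 2 / n%:R.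
have y_lt : t%:R / n%:R < sparse_delta :> R by rewrite ltr_pdivrMr.
have tw : 2 * expR 2 * (t%:R / n%:R) = t%:R * w by rewrite /w; ring.
have tw_le : t%:R * w <= 4^-1.
  by rewrite -tw; move: y_lt; rewrite /sparse_delta invfM ltr_pdivlMr ?expR_gt0; lra.
have y_le : t%:R / n%:R <= 2^-1 :> R.
  have y_ge0 : 0 <= t%:R / n%:R :> R by rewrite divr_ge0 ?ler0n ?ltW.
  move: tw_le; rewrite -tw => tw_le; nra.
apply: le_trans (sum_card_tail_le n_gt0 t_gt0 y_le) _; rewrite tw.
apply: le_trans (ler_wpM2l _ (pow_le_half_pow t_gt0 _ tw_le)) _;
  rewrite ?divr_ge0 ?mulr_ge0 ?expR_ge0 //.
rewrite /w; lra.
Qed.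

Definition prob_bad (delta : R) (n m k l : nat) : R :=
  #|[set E : edge_config n m k | bad_event delta l E]|%:R / #|[set: edge_config n m k]|%:R.

Lemma prob_goodE (delta : R) n m k l : (0 < n)%N ->
  prob_good delta n m k l = 1 - prob_bad delta n m k l.
Proof.
move=> n_gt0; rewrite /prob_good /prob_bad.
have all_gt0 : 0 < #|[set: edge_config n m k]|%:R :> R.
  by rewrite card_edge_configs ltr0n !expn_gt0 n_gt0.
have card_split : #|[set: edge_config n m k]| =
    (#|[set E : edge_config n m k | bad_event delta l E]|
     + #|[set E : edge_config n m k | ~~ bad_event delta l E]|)%N.
  rewrite cardsT -(cardsC [set E | bad_event delta l E]); congr (_ + _).
  by apply: eq_card => E; rewrite !inE.
by rewrite card_split natrD in all_gt0 *; field; rewrite lt0r_neq0.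
Qed.

Lemma num_edges_le (c : R) n : c <= 1 -> (num_edges c n <= n)%N.
Proof.
move=> c_le1; rewrite /num_edges truncn_le_nat.
apply: le_lt_trans (_ : _ <= n%:R) _; last by rewrite ltr_nat.
by rewrite -[leRHS]mul1r ler_wpM2r.
Qed.

Lemma prob_bad_le n m k l : (2 <= k)%N -> (2 <= l)%N -> (0 < n)%N -> (m <= n)%N ->
  prob_bad sparse_delta n m k l <= 12 * expR 2 / n%:R.
Proof.
move=> k_ge2 l_ge2 n_gt0 le_mn.
rewrite /prob_bad card_edge_configs.
have all_gt0 : 0 < ((n ^ k) ^ m)%:R :> R by rewrite ltr0n !expn_gt0 n_gt0.
apply: le_trans (_ : _ <= (\sum_(S : {set 'I_n} | small_set sparse_delta S)
    #|[set E : edge_config n m k | (#|S| + run_ends S <= #|edges_inside E S|)%N]|)%:R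
    / ((n ^ k) ^ m)%:R) _.
  by rewrite ler_pM2r ?invr_gt0 // ler_nat card_bad_event_le.
rewrite natr_sum mulr_suml.
apply: le_trans (_ : _ <= \sum_(S : {set 'I_n} | small_set sparse_delta S)
    expR #|S|%:R * (#|S|%:R / n%:R) ^+ (#|S| + run_ends S)) _.
  apply: ler_sum => S _.
  apply: le_trans (_ : _ <= ('C(m, #|S| + run_ends S) * ((#|S| ^ k) ^ (#|S| + run_ends S)
      * (n ^ k) ^ (m - (#|S| + run_ends S))))%:R / ((n ^ k) ^ m)%:R) _.
    by rewrite ler_pM2r ?invr_gt0 // ler_nat card_edges_inside_ge.
  by apply: edge_tail_ratio_le; rewrite // -[X in (_ <= X)%N]card_ord max_card.
rewrite big_card_partition.
apply: le_trans (_ : _ <= \sum_(t < n.+1) 6 * expR 2 / n%:R / 2 ^+ t) _.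
  apply: ler_sum => t _.
  rewrite (eq_bigr (fun S => expR t%:R * (t%:R / n%:R) ^+ (t + run_ends S))).
    exact: sum_small_card_le.
  by move=> S /andP [_ /eqP ->].
rewrite -mulr_sumr; apply: le_trans (ler_wpM2l _ (sum_inv_pow2_le _)) _.
  by rewrite divr_ge0 ?mulr_ge0 ?expR_ge0.
by lra.
Qed.

End Probability.

Theorem lemma5 (R : realType) (k l : nat) (c : R) :
  (2 <= k)%N -> (2 <= l)%N -> c <= 1 ->
  exists delta : R, 0 < delta /\
    (forall eps : R, 0 < eps -> exists N : nat, forall n : nat, (N <= n)%N ->
       1 - eps <= prob_good delta n (num_edges c n) k l).
Proof.
move=> k_ge2 l_ge2 c_le1; exists (sparse_delta R); split; first exact: sparse_delta_gt0.
move=> eps eps_gt0; exists (Num.truncn (12 * expR 2 / eps)).+1 => n lt_Nn.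
have n_gt0 : (0 < n)%N by case: n lt_Nn.
rewrite prob_goodE // lerD2l lerN2.
apply: le_trans (prob_bad_le R k_ge2 l_ge2 n_gt0 (num_edges_le n c_le1)) _.
have bound_ge0 : 0 <= 12 * expR 2 / eps by rewrite divr_ge0 ?mulr_ge0 ?expR_ge0 ?ltW.
move: lt_Nn; rewrite truncn_lt_nat // => /ltW; rewrite ler_pdivrMr // => le_n.
by rewrite ler_pdivrMr ?ltr0n //; lra.
Qed.
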